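(* In the setting of the context, the map $B\otimes M_1\to M_1$, $b\otimes x\mapsto b\triangleright x:=\lambda^{-1}E_{M_1}(bxe_2)$, defines a left $B$-module algebra structure on $M_1$ (with respect to the Hopf algebra structure of $B$ given in the context).
   Context: $k$ is a field; $C_R(S)=\{r\in R:rs=sr\ \forall s\in S\}$. $N\subseteq M$ is a strongly separable, irreducible extension of $k$-algebras: $C_M(N)=k1$ and there are an $N$-bimodule map $E:M\to N$ and $x_1,\dots,x_n,y_1,\dots,y_n\in M$ with $\sum_iE(mx_i)y_i=m=\sum_ix_iE(y_im)$ for all $m\in M$, $E(1)\neq0$, $\sum_ix_iy_i\neq0$; normalized so that $E(1)=1$, whence $\sum_ix_iy_i=\lambda^{-1}1$ with $0\neq\lambda\in k$. Basic construction: given $S\subseteq R$, an $S$-bimodule map $E_S:R\to S$ with $E_S(1)=1$ and $r_i,s_i\in R$ with $\sum_iE_S(rr_i)s_i=r=\sum_ir_iE_S(s_ir)$ and $\sum_ir_is_i=\lambda^{-1}1$, set $R_1=R\otimes_SR$ with product $(a\otimes b)(c\otimes d)=aE_S(bc)\otimes d$, unit $\sum_ir_i\otimes s_i$, $R\subseteq R_1$ via $r\mapsto\sum_irr_i\otimes s_i$, Jones idempotent $e=1\otimes1$, $E_R:R_1\to R$, $a\otimes b\mapsto\lambda ab$; then $E_R$, $\lambda^{-1}r_i\otimes1$, $1\otimes s_i$ satisfy the same conditions with the same $\lambda$. From $(N\subseteq M,E)$ get $M_1,e_1,E_M$; from $(M\subseteq M_1,E_M)$ get $M_2,e_2,E_{M_1}$.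 Let $A=C_{M_1}(N)$, $B=C_{M_2}(M)$, $C=C_{M_2}(N)$. Depth 2 is assumed: $M_1$ is free as right $M$-module with basis in $A$, $M_2$ free as right $M_1$-module with basis in $B$. Let $F=E_M\circ E_{M_1}$, with values on $C$ in $k1\cong k$. The form $\langle a,b\rangle=\lambda^{-2}F(ae_2e_1b)$ on $A\times B$ is non-degenerate; $B$ is a Hopf algebra with its algebra structure, $\Delta(b)=b_{(1)}\otimes b_{(2)}$ defined by $\langle a,b_{(1)}\rangle\langle a',b_{(2)}\rangle=\langle aa',b\rangle$ ($a,a'\in A$), counit $\varepsilon(b)=\langle1,b\rangle$, and antipode determined by $E_{M_1}(be_1e_2)=E_{M_1}(e_2e_1S(b))$. A left $B$-module algebra is an algebra with a left $B$-module structure such that $b\triangleright(xy)=(b_{(1)}\triangleright x)(b_{(2)}\triangleright y)$ and $b\triangleright1=\varepsilon(b)1$. *)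

From HB Require Import structures.
From mathcomp Require Import all_boot all_algebra.
From Stdlib Require Import IndefiniteDescription.
From Stdlib Require List.
Set Implicit Arguments. Unset Strict Implicit. Unset Printing Implicit Defensive.
Import GRing.Theory.
Local Open Scope ring_scope.

(* Axioms for the base algebra M come from its MathComp algType structure;
   for the constructed algebras M_1, M_2 they are consequences of the
   hypotheses (standard facts about the basic construction). *)
Record ralg (k : Type) := RAlg {
  rcar :> Type;
  rzero : rcar;
  radd : rcar -> rcar -> rcar;
  rscale : k -> rcar -> rcar;
  rmul : rcar -> rcar -> rcar;
  rone : rcar }.

Definition rsum (k : Type) (R : ralg k) (l : seq R) : R :=
  foldr (@radd k R) (@rzero k R) l.

Definition ralg_of (k : fieldType) (M : algType k) : ralg k :=
  @RAlg k M 0 +%R *:%R *%R 1.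

(* Input data of the basic construction: S ⊆ R, E_S : R -> S (valued in R),
   the quasi-basis (r_i, s_i) as a list of pairs, and lambda. *)
Record bdata (k : fieldType) := BData {
  bR : ralg k;
  bS : bR -> Prop;
  bE : bR -> bR;
  bqb : seq (bR * bR);
  blam : k }.

Section Basic.
Variables (k : fieldType) (D : bdata k).
Local Notation R := (bR D).
Local Notation "x + y" := (radd x y).
Local Notation "x * y" := (rmul x y).
Local Notation "c *: x" := (rscale c x).

Definition balanced (beta : R -> R -> k) : Prop :=
  [/\ forall a a' b, beta (a + a') b = (beta a b + beta a' b)%R,
      forall a b b', beta a (b + b') = (beta a b + beta a b')%R,
      forall c a b, beta (c *: a) b = (c * beta a b)%R,
      forall c a b, beta a (c *: b) = (c * beta a b)%R
    & forall s a b, @bS k D s -> beta (a * s) b = beta a (s * b)].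

Definition bal := {beta : R -> R -> k | balanced beta}.

(* formal sums  sum_t  c_t (a_t (x) b_t) *)
Definition evalT (l : seq (k * R * R)) (beta : R -> R -> k) : k :=
  (\sum_(t <- l) t.1.1 * beta t.1.2 t.2)%R.

(* R (x)_S R, realised as the image of the formal sums in the algebraic
   dual of the space of S-balanced bilinear forms (which is canonically
   isomorphic to the space Hom_k(R (x)_S R, k) and separates points). *)
Definition tens := {phi : bal -> k | exists l, phi = fun b => evalT l (sval b)}.

Definition tmk (l : seq (k * R * R)) : tens :=
  exist _ (fun b => evalT l (sval b)) (ex_intro _ l erefl).

Definition trep (x : tens) : seq (k * R * R) :=
  proj1_sig (constructive_indefinite_description _ (proj2_sig x)).

Definition t0 : tens := tmk [::].
Definition tadd (x y : tens) : tens := tmk (trep x ++ trep y).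
Definition tscale (c : k) (x : tens) : tens :=
  tmk [seq ((c * t.1.1)%R, t.1.2, t.2) | t <- trep x].
(* (a (x) b)(c (x) d) = a E_S(bc) (x) d *)
Definition tmul (x y : tens) : tens :=
  tmk [seq ((t.1.1 * u.1.1)%R, t.1.2 * @bE k D (t.2 * u.1.2), u.2)
      | t <- trep x, u <- trep y].
Definition t1 : tens := tmk [seq (1%R, p.1, p.2) | p <- bqb D].
Definition incl (r : R) : tens := tmk [seq (1%R, r * p.1, p.2) | p <- bqb D].
Definition jones : tens := tmk [:: (1%R, rone R, rone R)].
Definition tER (x : tens) : R :=
  rsum [seq (t.1.1 * blam D)%R *: (t.1.2 * t.2) | t <- trep x].

Definition tens_ralg : ralg k := @RAlg k tens t0 tadd tscale tmul t1.

Definition next : bdata k :=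
  @BData k tens_ralg (fun x => exists r, x = incl r) (fun x => incl (tER x))
    [seq (tscale (blam D)^-1 (tmk [:: (1%R, p.1, rone R)]),
          tmk [:: (1%R, rone R, p.2)]) | p <- bqb D]
    (blam D).
End Basic.

Section Tower.
Variables (k : fieldType) (D0 : bdata k).
Definition D1 := next D0.
Definition D2 := next D1.
Definition M1 : ralg k := bR D1.
Definition M2 : ralg k := bR D2.
Definition iota1 : bR D0 -> M1 := @incl k D0.
Definition iota2 : M1 -> M2 := @incl k D1.
Definition e1 : M1 := jones D0.
Definition e2 : M2 := jones D1.
Definition EM : M1 -> bR D0 := @tER k D0.
Definition EM1 : M2 -> M1 := @tER k D1.
Definition FF (x : M2) : bR D0 := EM (EM1 x).
Definition lam := blam D0.

Definition inA (a : M1) : Prop :=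
  forall n, @bS k D0 n -> rmul a (iota1 n) = rmul (iota1 n) a.
Definition inB (b : M2) : Prop :=
  forall m : bR D0, rmul b (iota2 (iota1 m)) = rmul (iota2 (iota1 m)) b.

(* <a, b> = lambda^-2 F(a e_2 e_1 b), an element of k1 ⊆ M *)
Definition pairing (a : M1) (b : M2) : bR D0 :=
  rscale (lam ^- 2) (FF (rmul (rmul (rmul (iota2 a) e2) (iota2 e1)) b)).

Definition act (b : M2) (x : M1) : M1 :=
  rscale (lam ^-1) (EM1 (rmul (rmul b (iota2 x)) e2)).

Definition free_right_basis (S T : ralg k) (j : S -> T) (P : T -> Prop) :=
  exists m (bs : 'I_m -> T),
    (forall i, P (bs i)) /\
    (forall x : T, exists cs : 'I_m -> S,
        x = rsum [seq rmul (bs i) (j (cs i)) | i <- enum 'I_m]) /\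
    (forall cs cs' : 'I_m -> S,
        rsum [seq rmul (bs i) (j (cs i)) | i <- enum 'I_m] =
        rsum [seq rmul (bs i) (j (cs' i)) | i <- enum 'I_m] -> cs = cs').

Definition depth2 : Prop :=
  free_right_basis iota1 inA /\ free_right_basis iota2 inB.

(* M_1 is a left B-module algebra under |>, where Delta(b) is given by
   any sum  sum_j b1_j (x) b2_j  in B (x) B satisfying the defining identity
   <a, b1_j><a', b2_j> = <aa', b>  for all a, a' in A. *)
Definition left_module_algebra : Prop :=
  (forall b b' x, inB b -> inB b' -> act (rmul b b') x = act b (act b' x)) /\
      (forall x, act (rone M2) x = x) /\
      (forall b b' x, inB b -> inB b' ->
          act (radd b b') x = radd (act b x) (act b' x)) /\
      (forall (c : k) b x, inB b -> act (rscale c b) x = rscale c (act b x)) /\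
      (forall b x y, inB b -> act b (radd x y) = radd (act b x) (act b y)) /\
      (forall (c : k) b x, inB b -> act b (rscale c x) = rscale c (act b x)) /\
      (forall b (x y : M1) (d : seq (M2 * M2)), inB b ->
          (forall p, List.In p d -> inB p.1 /\ inB p.2) ->
          (forall a a', inA a -> inA a' ->
             rsum [seq rmul (pairing a p.1) (pairing a' p.2) | p <- d]
             = pairing (rmul a a') b) ->
          act b (rmul x y) = rsum [seq rmul (act p.1 x) (act p.2 y) | p <- d])
    /\ (forall b, inB b -> act b (rone M1) = iota1 (pairing (rone M1) b)).
End Tower.

Definition base_data (k : fieldType) (M : algType k) (N : {pred M})
  (E : M -> M) (qb : seq (M * M)) (lambda : k) : bdata k :=
  @BData k (ralg_of M) (fun m => m \in N) E qb lambda.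

From Pilot Require Import Defs.
From HB Require Import structures.
From mathcomp Require Import all_boot all_algebra ring.
From Stdlib Require Import ProofIrrelevance FunctionalExtensionality.
From Stdlib Require Import IndefiniteDescription Classical.
Set Implicit Arguments. Unset Strict Implicit. Unset Printing Implicit Defensive.
Import GRing.Theory.
Local Open Scope ring_scope.

(** The tensor product [R ⊗_S R] is realised inside the dual of the
   space of S-balanced forms, so every identity in [M_1] or [M_2] can be
   checked by evaluating both sides on an arbitrary balanced form; this shows
   that the basic construction of a strongly separable extension is again
   strongly separable, which gives the algebra axioms of the tower.
   [M_1] acts faithfully on [M] by [Y ▷ z = λ⁻¹ E_M(Y z e_1)], with
   [(a ⊗ b) ▷ z = a E(b z)], and for [b ∈ B] the element [b ▷ e_1] acts on [M]
   through the Fourier transform [S b = E_{M_1}(e_2 e_1 b) ∈ A]: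
   [E(u ((b ▷ e_1) ▷ z)) = λ⁻¹ E((S b ▷ u) z)].  Irreducibility makes [E_M]
   scalar-valued on [A], depth 2 gives a basis of [A] with a dual basis for
   the resulting nondegenerate trace form, and with it the defining identity
   of [Δ b] becomes [Σ (b₁ ▷ e_1) w (b₂ ▷ e_1) = E(w) (b ▷ e_1)].  Since
   [M_1 = M e_1 M] and [B] commutes with [M], this is exactly the
   multiplicativity of [▷].  Finally [b ▷ 1] commutes with [M], hence is a
   scalar, which the pairing identifies. *)

Declare Scope ralg_scope.
Notation "x ⊞ y" := (radd x y) (at level 50, left associativity) : ralg_scope.
Notation "c ⊙ x" := (rscale c x) (at level 40) : ralg_scope.
Notation "x ⊠ y" := (rmul x y) (at level 40, left associativity) : ralg_scope.
Local Open Scope ralg_scope.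

Definition rlinear (k : fieldType) (R : ralg k) (phi : R -> k) :=
  (forall a b, phi (a ⊞ b) = phi a + phi b) /\ (forall c a, phi (c ⊙ a) = c * phi a).

(** [ralg] carries no axioms, so the k-algebra laws of [R] are part of the record. *)
Record strongly_separable (k : fieldType) (D : bdata k) : Prop := StronglySeparable {
  ss_addA : forall x y z : bR D, x ⊞ (y ⊞ z) = (x ⊞ y) ⊞ z;
  ss_addC : forall x y : bR D, x ⊞ y = y ⊞ x;
  ss_add0 : forall x : bR D, rzero (bR D) ⊞ x = x;
  ss_addN : forall x : bR D, x ⊞ ((-1) ⊙ x) = rzero (bR D);
  ss_scD : forall c (x y : bR D), c ⊙ (x ⊞ y) = c ⊙ x ⊞ c ⊙ y;
  ss_scDl : forall c d (x : bR D), (c + d) ⊙ x = c ⊙ x ⊞ d ⊙ x;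
  ss_scM : forall c d (x : bR D), c ⊙ (d ⊙ x) = (c * d) ⊙ x;
  ss_sc1 : forall x : bR D, 1 ⊙ x = x;
  ss_mulA : forall x y z : bR D, x ⊠ (y ⊠ z) = (x ⊠ y) ⊠ z;
  ss_mulDl : forall x y z : bR D, (x ⊞ y) ⊠ z = x ⊠ z ⊞ y ⊠ z;
  ss_mulDr : forall x y z : bR D, x ⊠ (y ⊞ z) = x ⊠ y ⊞ x ⊠ z;
  ss_mulZl : forall c (x y : bR D), (c ⊙ x) ⊠ y = c ⊙ (x ⊠ y);
  ss_mulZr : forall c (x y : bR D), x ⊠ (c ⊙ y) = c ⊙ (x ⊠ y);
  ss_mul1l : forall x : bR D, rone (bR D) ⊠ x = x;
  ss_mul1r : forall x : bR D, x ⊠ rone (bR D) = x;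
  ss_ES : forall x, @bS k D (@bE k D x);
  ss_ED : forall x y, @bE k D (x ⊞ y) = @bE k D x ⊞ @bE k D y;
  ss_EZ : forall c x, @bE k D (c ⊙ x) = c ⊙ @bE k D x;
  ss_EL : forall s x, @bS k D s -> @bE k D (s ⊠ x) = s ⊠ @bE k D x;
  ss_ER : forall s x, @bS k D s -> @bE k D (x ⊠ s) = @bE k D x ⊠ s;
  ss_E1 : @bE k D (rone (bR D)) = rone (bR D);
  ss_qb1 : forall x, rsum [seq @bE k D (x ⊠ p.1) ⊠ p.2 | p <- bqb D] = x;
  ss_qb2 : forall x, rsum [seq p.1 ⊠ @bE k D (p.2 ⊠ x) | p <- bqb D] = x;
  ss_qbl : rsum [seq p.1 ⊠ p.2 | p <- bqb D] = (blam D)^-1 ⊙ rone (bR D);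
  ss_lam : blam D != 0 }.

(** * The basic construction *)

Section BasicConstruction.
Variables (k : fieldType) (D : bdata k).
Hypothesis ssD : strongly_separable D.
Local Notation R := (bR D).
Local Notation T := (tens D).
Local Notation E := (@bE k D).
Local Notation qb := (bqb D).
Local Notation lam := (blam D).
Local Notation "0r" := (rzero R).
Local Notation "1r" := (rone R).
Local Notation bal := (@balanced k D).

Lemma rscale0 (x : R) : 0 ⊙ x = 0r.
Proof.
have addK (y z : R) : y ⊞ z ⊞ ((-1) ⊙ z) = y.
  by rewrite -ss_addA // ss_addN // ss_addC // ss_add0.
by rewrite -(addK (0 ⊙ x) (0 ⊙ x)) -ss_scDl // addr0 ss_addN.
Qed.

Lemma rlinear_rsum (phi : R -> k) l : rlinear phi -> phi (rsum l) = \sum_(x <- l) phi x.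
Proof.
move=> [Ha Hs]; elim: l => [|x l IH]; first by rewrite big_nil /= -(rscale0 0r) Hs mul0r.
by rewrite big_cons /= Ha IH.
Qed.

Lemma rsum_mull (l : seq R) y : y ⊠ rsum l = rsum [seq y ⊠ x | x <- l].
Proof.
elim: l => [|x l IH] /=; last by rewrite ss_mulDr // IH.
by rewrite -(rscale0 0r) ss_mulZr // !rscale0.
Qed.

Section BalancedForms.
Variable g : R -> R -> k.
Hypothesis Hg : bal g.

Lemma balDl a a' b : g (a ⊞ a') b = g a b + g a' b. Proof. by case: Hg. Qed.
Lemma balDr a b b' : g a (b ⊞ b') = g a b + g a b'. Proof. by case: Hg. Qed.
Lemma balZl c a b : g (c ⊙ a) b = c * g a b. Proof. by case: Hg. Qed.
Lemma balZr c a b : g a (c ⊙ b) = c * g a b. Proof. by case: Hg. Qed.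
Lemma balS s a b : @bS k D s -> g (a ⊠ s) b = g a (s ⊠ b).
Proof. by case: Hg => _ _ _ _; apply. Qed.

Lemma rlinear_ball b : rlinear (fun a => g a b).
Proof. by split=> *; [rewrite balDl | rewrite balZl]. Qed.
Lemma rlinear_balr a : rlinear (fun b => g a b).
Proof. by split=> *; [rewrite balDr | rewrite balZr]. Qed.

Lemma sum_qb_l c d : \sum_(p <- qb) g (p.1 ⊠ E (p.2 ⊠ c)) d = g c d.
Proof. by rewrite -[in RHS](ss_qb2 ssD c) (rlinear_rsum _ (rlinear_ball d)) big_map. Qed.

Lemma sum_qb_r a b : \sum_(p <- qb) g (a ⊠ E (b ⊠ p.1)) p.2 = g a b.
Proof.
rewrite -[in RHS](ss_qb1 ssD b) (rlinear_rsum _ (rlinear_balr a)) big_map.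
by apply: eq_bigr => p _; rewrite (balS _ _ (ss_ES ssD _)).
Qed.

Lemma balanced_mull r : bal (fun c d => g (r ⊠ c) d).
Proof.
split=> *; rewrite ?ss_mulDr ?ss_mulZr ?balDl ?balDr ?balZl ?balZr //.
by rewrite ss_mulA // balS.
Qed.

Lemma balanced_mulr r : bal (fun c d => g c (d ⊠ r)).
Proof.
split=> *; rewrite ?ss_mulDl ?ss_mulZl ?balDl ?balDr ?balZl ?balZr //.
by rewrite -ss_mulA // balS.
Qed.

Lemma balanced_mulE_r a b : bal (fun c d => g (a ⊠ E (b ⊠ c)) d).
Proof.
split.
- by move=> c c' d; rewrite ss_mulDr // ss_ED // ss_mulDr // balDl.
- by move=> c d d'; rewrite balDr.
- by move=> s c d; rewrite ss_mulZr // ss_EZ // ss_mulZr // balZl.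
- by move=> s c d; rewrite balZr.
- by move=> s c d Hs; rewrite ss_mulA // ss_ER // ss_mulA // balS.
Qed.

Lemma balanced_mulE_l c d : bal (fun a b => g (a ⊠ E (b ⊠ c)) d).
Proof.
split.
- by move=> a a' b; rewrite ss_mulDl // balDl.
- by move=> a b b'; rewrite ss_mulDl // ss_ED // ss_mulDr // balDl.
- by move=> s a b; rewrite ss_mulZl // balZl.
- by move=> s a b; rewrite ss_mulZl // ss_EZ // ss_mulZr // balZl.
- by move=> s a b Hs; rewrite -[(s ⊠ b) ⊠ c]ss_mulA // (ss_EL ssD _ Hs) ss_mulA.
Qed.

End BalancedForms.

Lemma balanced_mul_linear phi : rlinear phi -> bal (fun a b => lam * phi (a ⊠ b)).
Proof.
move=> [Ha Hs]; split.
- by move=> a a' b; rewrite ss_mulDl // Ha mulrDr.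
- by move=> a b b'; rewrite ss_mulDr // Ha mulrDr.
- by move=> c a b; rewrite ss_mulZl // Hs mulrCA.
- by move=> c a b; rewrite ss_mulZr // Hs mulrCA.
- by move=> s a b _; rewrite ss_mulA.
Qed.

(** A tensor is determined by its values [tev x g] on balanced forms [g] ([tens_ext]). *)
Definition tev (x : T) (g : R -> R -> k) : k := evalT (trep x) g.

Lemma trepP (x : T) : sval x = fun b : Defs.bal D => evalT (trep x) (sval b).
Proof. by rewrite /trep; case: constructive_indefinite_description. Qed.

Lemma tens_ext (x y : T) : (forall g, bal g -> tev x g = tev y g) -> x = y.
Proof.
move=> H.
have Exy : sval x = sval y.
  apply: functional_extensionality => b; rewrite trepP [in RHS]trepP.
  by case: b => g Hg /=; apply: H.
move: x y Exy {H} => [f Hf] [f' Hf'] /= Exy; subst f'.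
by rewrite (proof_irrelevance _ Hf Hf').
Qed.

Lemma tev_tmk l g : bal g -> tev (tmk l) g = evalT l g.
Proof. by move=> Hg; have /(f_equal (fun f => f (exist _ g Hg))) := trepP (tmk l). Qed.

Lemma tev_ext x g g' : (forall a b, g a b = g' a b) -> tev x g = tev x g'.
Proof. by move=> H; apply: eq_bigr => t _; rewrite H. Qed.

Lemma tev_addf x g g' : tev x (fun a b => g a b + g' a b) = tev x g + tev x g'.
Proof. by rewrite /tev /evalT -big_split /=; apply: eq_bigr => t _; rewrite mulrDr. Qed.

Lemma tev_scalef x c g : tev x (fun a b => c * g a b) = c * tev x g.
Proof. by rewrite /tev /evalT mulr_sumr; apply: eq_bigr => t _; rewrite mulrCA. Qed.

Lemma tev_sumf I (s : seq I) x (g : I -> R -> R -> k) :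
  tev x (fun a b => \sum_(i <- s) g i a b) = \sum_(i <- s) tev x (g i).
Proof. by rewrite /tev /evalT exchange_big /=; apply: eq_bigr => t _; rewrite mulr_sumr. Qed.

Lemma balanced_tev y (F : R -> R -> R -> R -> k) :
  (forall c d, bal (fun a b => F a b c d)) -> bal (fun a b => tev y (F a b)).
Proof.
move=> H; split.
- by move=> a a' b; rewrite -tev_addf; apply: tev_ext => c d; rewrite (balDl (H c d)).
- by move=> a b b'; rewrite -tev_addf; apply: tev_ext => c d; rewrite (balDr (H c d)).
- by move=> c a b; rewrite -tev_scalef; apply: tev_ext => c' d; rewrite (balZl (H c' d)).
- by move=> c a b; rewrite -tev_scalef; apply: tev_ext => c' d; rewrite (balZr (H c' d)).
- by move=> s a b Hs; apply: tev_ext => c d; rewrite (balS (H c d)).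
Qed.

Lemma balanced_tev_mulE y g : bal g ->
  bal (fun a b => tev y (fun c d => g (a ⊠ E (b ⊠ c)) d)).
Proof. by move=> Hg; apply: balanced_tev => c d; apply: balanced_mulE_l. Qed.

Definition ptens (a b : R) : T := tmk [:: (1, a, b)].
Definition tsum (l : seq T) : T := foldr (@tadd k D) (t0 D) l.

Lemma tev_ptens a b g : bal g -> tev (ptens a b) g = g a b.
Proof. by move=> Hg; rewrite tev_tmk // /evalT big_cons big_nil mul1r addr0. Qed.
Lemma tev_t0 g : bal g -> tev (t0 D) g = 0.
Proof. by move=> Hg; rewrite tev_tmk // /evalT big_nil. Qed.
Lemma tev_tadd x y g : bal g -> tev (tadd x y) g = tev x g + tev y g.
Proof. by move=> Hg; rewrite tev_tmk // /evalT big_cat. Qed.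
Lemma tev_tscale c x g : bal g -> tev (tscale c x) g = c * tev x g.
Proof.
move=> Hg; rewrite tev_tmk // /evalT big_map mulr_sumr.
by apply: eq_bigr => t _; rewrite mulrA.
Qed.
Lemma tev_tsum l g : bal g -> tev (tsum l) g = \sum_(x <- l) tev x g.
Proof.
move=> Hg; elim: l => [|x l IH] /=; first by rewrite big_nil tev_t0.
by rewrite big_cons tev_tadd // IH.
Qed.
Lemma tev_tmul x y g : bal g ->
  tev (tmul x y) g = tev x (fun a b => tev y (fun c d => g (a ⊠ E (b ⊠ c)) d)).
Proof.
move=> Hg; rewrite tev_tmk // /evalT /tev /evalT big_allpairs_dep /=.
by apply: eq_bigr => t _; rewrite mulr_sumr; apply: eq_bigr => u _; rewrite mulrA.
Qed.
Lemma tev_t1 g : bal g -> tev (t1 D) g = \sum_(p <- qb) g p.1 p.2.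
Proof. by move=> Hg; rewrite tev_tmk // /evalT big_map; apply: eq_bigr => p _; rewrite mul1r. Qed.
Lemma tev_incl r g : bal g -> tev (incl r) g = \sum_(p <- qb) g (r ⊠ p.1) p.2.
Proof. by move=> Hg; rewrite tev_tmk // /evalT big_map; apply: eq_bigr => p _; rewrite mul1r. Qed.

Lemma taddA x y z : tadd x (tadd y z) = tadd (tadd x y) z :> T.
Proof. by apply: tens_ext => g Hg; rewrite !tev_tadd // addrA. Qed.
Lemma taddC (x y : T) : tadd x y = tadd y x.
Proof. by apply: tens_ext => g Hg; rewrite !tev_tadd // addrC. Qed.
Lemma tadd0 (x : T) : tadd (t0 D) x = x.
Proof. by apply: tens_ext => g Hg; rewrite !tev_tadd // tev_t0 // add0r. Qed.
Lemma taddN (x : T) : tadd x (tscale (-1) x) = t0 D.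
Proof. by apply: tens_ext => g Hg; rewrite tev_tadd // tev_tscale // tev_t0 // mulN1r subrr. Qed.
Lemma tscD c (x y : T) : tscale c (tadd x y) = tadd (tscale c x) (tscale c y).
Proof. by apply: tens_ext => g Hg; rewrite !(tev_tadd, tev_tscale) // mulrDr. Qed.
Lemma tscDl c d (x : T) : tscale (c + d) x = tadd (tscale c x) (tscale d x).
Proof. by apply: tens_ext => g Hg; rewrite !(tev_tadd, tev_tscale) // mulrDl. Qed.
Lemma tscM c d (x : T) : tscale c (tscale d x) = tscale (c * d) x.
Proof. by apply: tens_ext => g Hg; rewrite !tev_tscale // mulrA. Qed.
Lemma tsc1 (x : T) : tscale 1 x = x.
Proof. by apply: tens_ext => g Hg; rewrite tev_tscale // mul1r. Qed.
Lemma tscale0 (x : T) : tscale 0 x = t0 D.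
Proof. by apply: tens_ext => g Hg; rewrite tev_tscale // tev_t0 // mul0r. Qed.
Lemma tscalex0 c : tscale c (t0 D) = t0 D.
Proof. by apply: tens_ext => g Hg; rewrite tev_tscale // tev_t0 // mulr0. Qed.

Lemma tmulA (x y z : T) : tmul x (tmul y z) = tmul (tmul x y) z.
Proof.
apply: tens_ext => g Hg.
rewrite [RHS]tev_tmul // [RHS]tev_tmul; last exact: balanced_tev_mulE.
rewrite [LHS]tev_tmul //; apply: tev_ext => a b.
rewrite tev_tmul; last exact: balanced_mulE_r.
apply: tev_ext => c d; apply: tev_ext => e f.
by rewrite (ss_mulA ssD b) (ss_ER ssD _ (ss_ES ssD _)) ss_mulA.
Qed.

Lemma tmulDl (x x' y : T) : tmul (tadd x x') y = tadd (tmul x y) (tmul x' y).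
Proof.
apply: tens_ext => g Hg.
by rewrite tev_tadd // !tev_tmul // tev_tadd //; exact: balanced_tev_mulE.
Qed.
Lemma tmulDr (x y y' : T) : tmul x (tadd y y') = tadd (tmul x y) (tmul x y').
Proof.
apply: tens_ext => g Hg.
rewrite tev_tadd // !tev_tmul // -tev_addf; apply: tev_ext => a b.
by rewrite tev_tadd //; exact: balanced_mulE_r.
Qed.
Lemma tmulZl c (x y : T) : tmul (tscale c x) y = tscale c (tmul x y).
Proof.
apply: tens_ext => g Hg.
by rewrite tev_tscale // !tev_tmul // tev_tscale //; exact: balanced_tev_mulE.
Qed.
Lemma tmulZr c (x y : T) : tmul x (tscale c y) = tscale c (tmul x y).
Proof.
apply: tens_ext => g Hg.
rewrite tev_tscale // !tev_tmul // -tev_scalef; apply: tev_ext => a b.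
by rewrite tev_tscale //; exact: balanced_mulE_r.
Qed.
Lemma tmul0r (x : T) : tmul (t0 D) x = t0 D.
Proof. by rewrite -(tscale0 (t0 D)) tmulZl !tscale0. Qed.
Lemma tmulr0 (x : T) : tmul x (t0 D) = t0 D.
Proof. by rewrite -(tscale0 (t0 D)) tmulZr !tscale0. Qed.

Lemma tmul1l (x : T) : tmul (t1 D) x = x.
Proof.
apply: tens_ext => g Hg.
rewrite tev_tmul // tev_t1; last exact: balanced_tev_mulE.
by rewrite -tev_sumf; apply: tev_ext => c d; apply: sum_qb_l.
Qed.
Lemma tmul1r (x : T) : tmul x (t1 D) = x.
Proof.
apply: tens_ext => g Hg.
rewrite tev_tmul //; apply: tev_ext => a b.
by rewrite tev_t1; [apply: sum_qb_r | apply: balanced_mulE_r].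
Qed.

Lemma tev_incl_mul r x g : bal g -> tev (tmul (incl r) x) g = tev x (fun c d => g (r ⊠ c) d).
Proof.
move=> Hg; rewrite tev_tmul // tev_incl; last exact: balanced_tev_mulE.
rewrite -tev_sumf; apply: tev_ext => c d.
rewrite -[in RHS](ss_qb2 ssD c) rsum_mull -map_comp.
rewrite (rlinear_rsum _ (rlinear_ball Hg d)) big_map.
by apply: eq_bigr => p _; rewrite -ss_mulA.
Qed.
Lemma tev_mul_incl r x g : bal g -> tev (tmul x (incl r)) g = tev x (fun a b => g a (b ⊠ r)).
Proof.
move=> Hg; rewrite tev_tmul //; apply: tev_ext => a b.
rewrite tev_incl; last exact: balanced_mulE_r.
by rewrite -(sum_qb_r Hg a (b ⊠ r)); apply: eq_bigr => p _; rewrite ss_mulA.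
Qed.

Lemma incl_mul (r s : R) : incl (r ⊠ s) = tmul (incl r) (incl s).
Proof.
apply: tens_ext => g Hg; rewrite tev_incl_mul // !tev_incl //; last exact: balanced_mull.
by apply: eq_bigr => p _; rewrite ss_mulA.
Qed.
Lemma incl_add (r s : R) : incl (r ⊞ s) = tadd (incl r) (incl s).
Proof.
apply: tens_ext => g Hg; rewrite tev_tadd // !tev_incl // -big_split /=.
by apply: eq_bigr => p _; rewrite ss_mulDl // balDl.
Qed.
Lemma incl_scale c (r : R) : incl (c ⊙ r) = tscale c (incl r).
Proof.
apply: tens_ext => g Hg; rewrite tev_tscale // !tev_incl // mulr_sumr.
by apply: eq_bigr => p _; rewrite ss_mulZl // balZl.
Qed.
Lemma incl1 : incl 1r = t1 D.
Proof.
apply: tens_ext => g Hg; rewrite tev_incl // tev_t1 //.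
by apply: eq_bigr => p _; rewrite ss_mul1l.
Qed.

Lemma ptens_mul a b c d : tmul (ptens a b) (ptens c d) = ptens (a ⊠ E (b ⊠ c)) d.
Proof.
apply: tens_ext => g Hg; rewrite tev_tmul // tev_ptens; last exact: balanced_tev_mulE.
by rewrite !tev_ptens //; exact: balanced_mulE_r.
Qed.
Lemma incl_ptens r a b : tmul (incl r) (ptens a b) = ptens (r ⊠ a) b.
Proof. by apply: tens_ext => g Hg; rewrite tev_incl_mul // !tev_ptens //; exact: balanced_mull. Qed.
Lemma ptens_incl r a b : tmul (ptens a b) (incl r) = ptens a (b ⊠ r).
Proof. by apply: tens_ext => g Hg; rewrite tev_mul_incl // !tev_ptens //; exact: balanced_mulr. Qed.
Lemma ptensS s a b : @bS k D s -> ptens (a ⊠ s) b = ptens a (s ⊠ b).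
Proof. by move=> Hs; apply: tens_ext => g Hg; rewrite !tev_ptens // balS. Qed.
Lemma ptensDr a b b' : ptens a (b ⊞ b') = tadd (ptens a b) (ptens a b').
Proof. by apply: tens_ext => g Hg; rewrite tev_tadd // !tev_ptens // balDr. Qed.
Lemma ptensZr c a b : ptens a (c ⊙ b) = tscale c (ptens a b).
Proof. by apply: tens_ext => g Hg; rewrite tev_tscale // !tev_ptens // balZr. Qed.
Lemma jonesE : jones D = ptens 1r 1r. Proof. by []. Qed.
Lemma t1E : t1 D = tsum [seq ptens p.1 p.2 | p <- qb].
Proof.
apply: tens_ext => g Hg; rewrite tev_t1 // tev_tsum // big_map.
by apply: eq_bigr => p _; rewrite tev_ptens.
Qed.

Lemma tens_ind (P : T -> Prop) :
  P (t0 D) -> (forall x y, P x -> P y -> P (tadd x y)) ->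
  (forall c x, P x -> P (tscale c x)) -> (forall a b, P (ptens a b)) -> forall x, P x.
Proof.
move=> H0 HD HZ Hp x.
have -> : x = tsum [seq tscale t.1.1 (ptens t.1.2 t.2) | t <- trep x].
  apply: tens_ext => g Hg; rewrite tev_tsum // big_map.
  by apply: eq_bigr => t _; rewrite tev_tscale // tev_ptens.
by elim: (trep x) => [|t l IH] //=; apply: HD => //; apply: HZ.
Qed.

Lemma tsum_mull (l : seq T) y : tmul y (tsum l) = tsum [seq tmul y x | x <- l].
Proof. by elim: l => [|x l IH] /=; [exact: tmulr0 | rewrite tmulDr IH]. Qed.
Lemma tsum_mulr (l : seq T) y : tmul (tsum l) y = tsum [seq tmul x y | x <- l].
Proof. by elim: l => [|x l IH] /=; [exact: tmul0r | rewrite tmulDl IH]. Qed.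
Lemma tsum_scale (l : seq T) c : tscale c (tsum l) = tsum [seq tscale c x | x <- l].
Proof. by elim: l => [|x l IH] /=; [exact: tscalex0 | rewrite tscD IH]. Qed.
Lemma tsum_map_add I (s : seq I) (f g : I -> T) :
  tsum [seq tadd (f i) (g i) | i <- s] = tadd (tsum [seq f i | i <- s]) (tsum [seq g i | i <- s]).
Proof.
apply: tens_ext => h Hh; rewrite tev_tadd // !tev_tsum // !big_map -big_split /=.
by apply: eq_bigr => i _; rewrite tev_tadd.
Qed.
Lemma tsum_ext I (s : seq I) (f g : I -> T) : (forall i, f i = g i) ->
  tsum [seq f i | i <- s] = tsum [seq g i | i <- s].
Proof. by move=> H; congr tsum; apply: eq_map. Qed.
Lemma tsum0 I (s : seq I) : tsum [seq t0 D | _ <- s] = t0 D.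
Proof. by elim: s => [|i s IH] //=; rewrite IH tadd0. Qed.

Lemma tER_linear phi x : rlinear phi -> phi (tER x) = tev x (fun a b => lam * phi (a ⊠ b)).
Proof.
move=> Hphi; rewrite /tER (rlinear_rsum _ Hphi) big_map /tev /evalT.
by apply: eq_bigr => t _; case: Hphi => _ ->; rewrite mulrA.
Qed.

Lemma tens_separated (x y : T) :
  (forall phi : T -> k, rlinear (R := tens_ralg D) phi -> phi x = phi y) -> x = y.
Proof.
move=> H; apply: tens_ext => g Hg; apply: (H (fun z => tev z g)).
by split=> *; [exact: tev_tadd | exact: tev_tscale].
Qed.

Definition incl_form (g : R -> R -> k) (w : R) : k := \sum_(p <- qb) g (w ⊠ p.1) p.2.

Lemma rlinear_incl_form g : bal g -> rlinear (incl_form g).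
Proof.
move=> Hg; split.
- move=> a b; rewrite /incl_form -big_split.
  by apply: eq_bigr => p _; rewrite ss_mulDl // balDl.
- move=> c a; rewrite /incl_form mulr_sumr.
  by apply: eq_bigr => p _; rewrite ss_mulZl // balZl.
Qed.

Lemma balanced_incl_form g : bal g -> bal (fun a b => lam * incl_form g (a ⊠ b)).
Proof. by move=> Hg; apply/balanced_mul_linear/rlinear_incl_form. Qed.

Lemma tev_incl_tER (x : T) g : bal g ->
  tev (incl (tER x)) g = tev x (fun a b => lam * incl_form g (a ⊠ b)).
Proof. by move=> Hg; rewrite tev_incl // -tER_linear //; apply: rlinear_incl_form. Qed.

Lemma incl_tER_add (x y : T) : incl (tER (tadd x y)) = tadd (incl (tER x)) (incl (tER y)).
Proof.
apply: tens_ext => g Hg.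
by rewrite tev_tadd // !tev_incl_tER // tev_tadd //; apply: balanced_incl_form.
Qed.

Lemma incl_tER_scale c (x : T) : incl (tER (tscale c x)) = tscale c (incl (tER x)).
Proof.
apply: tens_ext => g Hg.
by rewrite tev_tscale // !tev_incl_tER // tev_tscale //; apply: balanced_incl_form.
Qed.

Lemma incl_tER_mull (r : R) (x : T) : incl (tER (tmul (incl r) x)) = tmul (incl r) (incl (tER x)).
Proof.
apply: tens_ext => g Hg.
rewrite tev_incl_tER // tev_incl_mul //; last exact: balanced_incl_form.
rewrite tev_incl_mul // tev_incl_tER //; last exact: balanced_mull.
apply: tev_ext => a b; congr (_ * _).
by apply: eq_bigr => p _; rewrite !ss_mulA.
Qed.

Lemma incl_tER_mulr (r : R) (x : T) : incl (tER (tmul x (incl r))) = tmul (incl (tER x)) (incl r).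
Proof.
apply: tens_ext => g Hg.
rewrite tev_incl_tER // tev_mul_incl //; last exact: balanced_incl_form.
rewrite tev_mul_incl // tev_incl_tER //; last exact: balanced_mulr.
apply: tev_ext => a b; congr (_ * _).
rewrite /incl_form -tev_incl // -(tev_incl (a ⊠ b) (balanced_mulr Hg r)).
by rewrite -tev_mul_incl // -incl_mul ss_mulA.
Qed.

Lemma incl_tER_t1 : incl (tER (t1 D)) = t1 D.
Proof.
apply: tens_ext => g Hg.
rewrite tev_incl_tER // tev_t1 //; last exact: balanced_incl_form.
rewrite -mulr_sumr -(big_map (fun p => p.1 ⊠ p.2) xpredT (incl_form g)).
rewrite -(rlinear_rsum _ (rlinear_incl_form Hg)) (ss_qbl ssD).
case: (rlinear_incl_form Hg) => _ ->; rewrite mulrA mulfV ?(ss_lam ssD) // mul1r.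
by rewrite /incl_form tev_t1 //; apply: eq_bigr => p _; rewrite ss_mul1l.
Qed.

Lemma tev_rsum (l : seq T) g : bal g -> tev (rsum (R := tens_ralg D) l) g = \sum_(x <- l) tev x g.
Proof. exact: tev_tsum. Qed.

Lemma tev_qb1_term (x : T) (y z : R) g : bal g ->
  tev (tmul (incl (tER (tmul x (tscale lam^-1 (ptens z 1r))))) (ptens 1r y)) g =
  tev x (fun a b => g (a ⊠ E (b ⊠ z)) y).
Proof.
move=> Hg; have Hy := balanced_mul_linear (rlinear_ball Hg y).
rewrite tev_incl_mul // tev_ptens; last exact: balanced_mull.
rewrite ss_mul1r // (tER_linear _ (rlinear_ball Hg y)) tmulZr tev_tscale // tev_tmul //.
rewrite -tev_scalef; apply: tev_ext => a b.
rewrite tev_ptens; last exact: (balanced_mulE_r Hy a b).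
by rewrite ss_mul1r // mulrA mulVf ?(ss_lam ssD) // mul1r.
Qed.

Lemma tev_qb2_term (x : T) (y z : R) g : bal g ->
  tev (tmul (tscale lam^-1 (ptens z 1r)) (incl (tER (tmul (ptens 1r y) x)))) g =
  tev x (fun c d => g (z ⊠ E (y ⊠ c)) d).
Proof.
move=> Hg; have Hz := balanced_mul_linear (rlinear_balr Hg z).
rewrite tmulZl tev_tscale // ptens_incl tev_ptens // ss_mul1l //.
rewrite (tER_linear _ (rlinear_balr Hg z)) tev_tmul // tev_ptens;
  last exact: (balanced_tev_mulE x Hz).
rewrite -tev_scalef; apply: tev_ext => c d.
by rewrite ss_mul1l // -(balS Hg _ _ (ss_ES ssD _)) mulrA mulVf ?(ss_lam ssD) // mul1r.
Qed.

Lemma strongly_separable_next : strongly_separable (Defs.next D).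
Proof.
split.
- exact: taddA.
- exact: taddC.
- exact: tadd0.
- exact: taddN.
- exact: tscD.
- exact: tscDl.
- exact: tscM.
- exact: tsc1.
- exact: tmulA.
- exact: tmulDl.
- exact: tmulDr.
- exact: tmulZl.
- exact: tmulZr.
- exact: tmul1l.
- exact: tmul1r.
- by move=> x; exists (tER x).
- exact: incl_tER_add.
- exact: incl_tER_scale.
- by move=> _ x [r ->]; apply: incl_tER_mull.
- by move=> _ x [r ->]; apply: incl_tER_mulr.
- exact: incl_tER_t1.
- move=> x; apply: tens_ext => g Hg; rewrite tev_rsum // !big_map.
  rewrite -[RHS](tev_ext x (sum_qb_r Hg)) tev_sumf.
  by apply: eq_bigr => p _; apply: tev_qb1_term.
- move=> x; apply: tens_ext => g Hg; rewrite tev_rsum // !big_map.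
  rewrite -[RHS](tev_ext x (sum_qb_l Hg)) tev_sumf.
  by apply: eq_bigr => p _; apply: tev_qb2_term.
- apply: tens_ext => g Hg; rewrite tev_rsum // !big_map /= tev_tscale // tev_t1 // mulr_sumr.
  apply: eq_bigr => p _; rewrite /= -/(ptens _ _) tmulZl tev_tscale // ptens_mul tev_ptens //.
  by rewrite ss_mul1l // (ss_E1 ssD) ss_mul1r.
- exact: (ss_lam ssD).
Qed.

Section Separated.
Hypothesis sepR : forall x y : R, (forall phi, rlinear phi -> phi x = phi y) -> x = y.

Lemma tER_add (x y : T) : tER (tadd x y) = tER x ⊞ tER y.
Proof.
apply: sepR => phi Hphi; case: (Hphi) => Ha _.
by rewrite Ha !tER_linear // tev_tadd //; exact: balanced_mul_linear.
Qed.
Lemma tER_scale c (x : T) : tER (tscale c x) = c ⊙ tER x.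
Proof.
apply: sepR => phi Hphi; case: (Hphi) => _ Hs.
by rewrite Hs !tER_linear // tev_tscale //; exact: balanced_mul_linear.
Qed.
Lemma tER_t0 : tER (t0 D) = 0r.
Proof. by rewrite -(tscale0 (t0 D)) tER_scale rscale0. Qed.
Lemma tER_ptens a b : tER (ptens a b) = lam ⊙ (a ⊠ b).
Proof.
apply: sepR => phi Hphi; case: (Hphi) => _ Hs.
by rewrite Hs tER_linear // tev_ptens //; exact: balanced_mul_linear.
Qed.
Lemma tER_incl_mul r (x : T) : tER (tmul (incl r) x) = r ⊠ tER x.
Proof.
apply: sepR => phi Hphi.
have Hphi' : rlinear (fun w => phi (r ⊠ w)).
  by case: Hphi => Ha Hs; split=> *; rewrite ?ss_mulDr ?ss_mulZr ?Ha ?Hs.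
rewrite (tER_linear _ Hphi) (tER_linear _ Hphi') tev_incl_mul //; last exact: balanced_mul_linear.
by apply: tev_ext => a b; rewrite ss_mulA.
Qed.
Lemma tER_mul_incl r (x : T) : tER (tmul x (incl r)) = tER x ⊠ r.
Proof.
apply: sepR => phi Hphi.
have Hphi' : rlinear (fun w => phi (w ⊠ r)).
  by case: Hphi => Ha Hs; split=> *; rewrite ?ss_mulDl ?ss_mulZl ?Ha ?Hs.
rewrite (tER_linear _ Hphi) (tER_linear _ Hphi') tev_mul_incl //; last exact: balanced_mul_linear.
by apply: tev_ext => a b; rewrite ss_mulA.
Qed.
Lemma tER_tsum (l : seq T) : tER (tsum l) = rsum [seq tER x | x <- l].
Proof. by elim: l => [|x l IH] /=; [exact: tER_t0 | rewrite tER_add IH]. Qed.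

End Separated.

End BasicConstruction.

(** * The tower [N ⊆ M ⊆ M_1 ⊆ M_2] *)

Section Tower.
Variables (k : fieldType) (M : algType k) (N : {pred M}) (E : M -> M).
Variables (qb : seq (M * M)) (lambda : k).
Hypothesis subalgN : subalg_closed N.
Hypothesis irreducible :
  forall m : M, (forall n, n \in N -> m * n = n * m) -> exists c : k, m = c%:A.
Hypothesis E_in_N : forall m, E m \in N.
Hypothesis ED : forall m m', E (m + m') = E m + E m'.
Hypothesis EL : forall n m, n \in N -> E (n * m) = n * E m.
Hypothesis ER : forall n m, n \in N -> E (m * n) = E m * n.
Hypothesis qb_expand_r : forall m, \sum_(p <- qb) E (m * p.1) * p.2 = m.
Hypothesis qb_expand_l : forall m, \sum_(p <- qb) p.1 * E (p.2 * m) = m.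
Hypothesis E_one : E 1 = 1.
Hypothesis lambda_neq0 : lambda != 0.
Hypothesis qb_sum : \sum_(p <- qb) p.1 * p.2 = lambda^-1%:A.

Local Notation D0 := (base_data N E qb lambda).
Local Notation D1 := (Defs.next D0).
Local Notation T1 := (tens D0).
Local Notation T2 := (tens D1).
Local Notation E1 := (@bE k D1).
Local Notation ι := (incl (D := D0)).
Local Notation ι2 := (incl (D := D1)).
Local Notation e1 := (jones D0).
Local Notation e2 := (jones D1).
Local Notation pt0 := (ptens (D := D0)).
Local Notation pt1 := (ptens (D := D1)).

Lemma rsumE (l : seq M) : rsum (R := ralg_of M) l = \sum_(x <- l) x.
Proof. by elim: l => [|x l IH] /=; rewrite ?big_nil ?big_cons // IH. Qed.

Lemma EZ c x : E (c *: x) = c *: E x.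
Proof.
have alg_in_N : c%:A \in N.
  case: subalgN => N1 NZ _.
  have N0 : 0 \in N by have := NZ (-1) 1 1 N1 N1; rewrite scaleN1r addNr.
  by have := NZ c 1 0 N1 N0; rewrite addr0.
by rewrite -mulr_algl EL // mulr_algl.
Qed.

Lemma E0 : E 0 = 0.
Proof. by have := EZ 0 0; rewrite !scale0r. Qed.

Lemma E_sum I (s : seq I) (f : I -> M) : E (\sum_(i <- s) f i) = \sum_(i <- s) E (f i).
Proof. by elim: s => [|i s IH]; rewrite ?big_nil ?E0 // !big_cons ED IH. Qed.

Lemma ss0 : strongly_separable D0.
Proof.
split => /=.
- exact: addrA.
- exact: addrC.
- exact: add0r.
- by move=> x; rewrite scaleN1r subrr.
- by move=> *; rewrite scalerDr.
- by move=> *; rewrite scalerDl.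
- by move=> *; rewrite scalerA.
- exact: scale1r.
- exact: mulrA.
- exact: mulrDl.
- exact: mulrDr.
- by move=> *; rewrite scalerAl.
- by move=> *; rewrite scalerAr.
- exact: mul1r.
- exact: mulr1.
- exact: E_in_N.
- exact: ED.
- exact: EZ.
- exact: EL.
- exact: ER.
- exact: E_one.
- by move=> x; rewrite rsumE big_map qb_expand_r.
- by move=> x; rewrite rsumE big_map qb_expand_l.
- by rewrite rsumE big_map qb_sum.
- exact: lambda_neq0.
Qed.

Lemma ss1 : strongly_separable D1.
Proof. exact: strongly_separable_next ss0. Qed.

Lemma separatedM1 (x y : T1) :
  (forall phi : T1 -> k, rlinear (R := bR D1) phi -> phi x = phi y) -> x = y.
Proof. exact: tens_separated. Qed.

(** Instances at levels 0 and 1, restated with the operations of [M] and [M_1] so that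
   they rewrite syntactically. *)
Lemma ptens_mul0 (a b c d : M) : tmul (pt0 a b) (pt0 c d) = pt0 (a * E (b * c)) d.
Proof. exact: (ptens_mul ss0). Qed.
Lemma ptens_incl0 (a b r : M) : tmul (pt0 a b) (ι r) = pt0 a (b * r).
Proof. exact: (ptens_incl ss0). Qed.
Lemma incl_ptens0 (r a b : M) : tmul (ι r) (pt0 a b) = pt0 (r * a) b.
Proof. exact: (incl_ptens ss0). Qed.
Lemma ptensS0 (s a b : M) : s \in N -> pt0 (a * s) b = pt0 a (s * b).
Proof. exact: (@ptensS k D0 s a b). Qed.
Lemma incl_mul0 (r s : M) : ι (r * s) = tmul (ι r) (ι s).
Proof. exact: (incl_mul ss0). Qed.
Lemma incl_add0 (r s : M) : ι (r + s) = tadd (ι r) (ι s).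
Proof. exact: (incl_add ss0). Qed.
Lemma incl_scale0 c (r : M) : ι (c *: r) = tscale c (ι r).
Proof. exact: (incl_scale ss0). Qed.
Lemma incl_alg c : ι c%:A = tscale c (t1 D0).
Proof. by rewrite incl_scale0 (incl1 ss0). Qed.
Lemma incl0 : ι 0 = t0 D0.
Proof. by rewrite -(scale0r 1) incl_alg tscale0. Qed.

Lemma ptens_mul1 (X Y X' Y' : T1) :
  tmul (pt1 X Y) (pt1 X' Y') = pt1 (tmul X (E1 (tmul Y X'))) Y'.
Proof. exact: (ptens_mul ss1). Qed.
Lemma ptens_incl1 (X Y Z : T1) : tmul (pt1 X Y) (ι2 Z) = pt1 X (tmul Y Z).
Proof. exact: (ptens_incl ss1). Qed.
Lemma incl_ptens1 (Z X Y : T1) : tmul (ι2 Z) (pt1 X Y) = pt1 (tmul Z X) Y.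
Proof. exact: (incl_ptens ss1). Qed.
Lemma incl_mul1 (X Y : T1) : ι2 (tmul X Y) = tmul (ι2 X) (ι2 Y).
Proof. exact: (incl_mul ss1). Qed.
Lemma incl_add1 (X Y : T1) : ι2 (tadd X Y) = tadd (ι2 X) (ι2 Y).
Proof. exact: (incl_add ss1). Qed.
Lemma incl_scale1 c (X : T1) : ι2 (tscale c X) = tscale c (ι2 X).
Proof. exact: (incl_scale ss1). Qed.
Lemma tER_ptens1 (X Y : T1) : tER (pt1 X Y) = tscale lambda (tmul X Y).
Proof. exact: (tER_ptens ss1 separatedM1). Qed.
Lemma tER_add1 (x y : T2) : tER (tadd x y) = tadd (tER x) (tER y).
Proof. exact: (tER_add ss1 separatedM1). Qed.
Lemma tER_scale1 c (x : T2) : tER (tscale c x) = tscale c (tER x).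
Proof. exact: (tER_scale ss1 separatedM1). Qed.
Lemma tER_t0_1 : tER (t0 D1) = t0 D0.
Proof. exact: (tER_t0 ss1 separatedM1). Qed.
Lemma tER_incl_mul1 (Z : T1) (x : T2) : tER (tmul (ι2 Z) x) = tmul Z (tER x).
Proof. exact: (tER_incl_mul ss1 separatedM1). Qed.
Lemma tER_mul_incl1 (Z : T1) (x : T2) : tER (tmul x (ι2 Z)) = tmul (tER x) Z.
Proof. exact: (tER_mul_incl ss1 separatedM1). Qed.
Lemma E1R (s x : T1) : @bS k D1 s -> E1 (tmul x s) = tmul (E1 x) s.
Proof. exact: (ss_ER ss1). Qed.
Lemma E1E (x : T1) : E1 x = ι (tER x).
Proof. by []. Qed.

Definition bact (b : T2) (x : T1) : T1 := tscale lambda^-1 (tER (tmul (tmul b (ι2 x)) e2)).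

Lemma bact_ptens X Y x : bact (pt1 X Y) x = tmul X (E1 (tmul Y x)).
Proof.
rewrite /bact ptens_incl1 jonesE ptens_mul1 tER_ptens1 /=.
by rewrite tscM mulVf // tsc1 !(tmul1r ss0).
Qed.

Lemma bact0l x : bact (t0 D1) x = t0 D0.
Proof. by rewrite /bact !(tmul0r ss1) tER_t0_1 tscalex0. Qed.
Lemma bactDl b b' x : bact (tadd b b') x = tadd (bact b x) (bact b' x).
Proof. by rewrite /bact !(tmulDl ss1) tER_add1 tscD. Qed.
Lemma bactZl c b x : bact (tscale c b) x = tscale c (bact b x).
Proof. by rewrite /bact !(tmulZl ss1) tER_scale1 !tscM mulrC. Qed.
Lemma bactDr b x y : bact b (tadd x y) = tadd (bact b x) (bact b y).
Proof. by rewrite /bact incl_add1 (tmulDr ss1) (tmulDl ss1) tER_add1 tscD. Qed.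
Lemma bactZr c b x : bact b (tscale c x) = tscale c (bact b x).
Proof. by rewrite /bact incl_scale1 (tmulZr ss1) (tmulZl ss1) tER_scale1 !tscM mulrC. Qed.
Lemma bact0r b : bact b (t0 D0) = t0 D0.
Proof. by rewrite -(tscale0 (t0 D0)) bactZr !tscale0. Qed.

Lemma bact_mul b b' x : bact (tmul b b') x = bact b (bact b' x).
Proof.
elim/(tens_ind (D := D1)): b b' x.
- by move=> b' x; rewrite (tmul0r ss1) !bact0l.
- by move=> b1 b2 IH1 IH2 b' x; rewrite (tmulDl ss1) !bactDl IH1 IH2.
- by move=> c b IH b' x; rewrite (tmulZl ss1) !bactZl IH.
move=> X Y b'; elim/(tens_ind (D := D1)): b'.
- by move=> x; rewrite (tmulr0 ss1) bact0l bact0r.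
- by move=> b1 b2 IH1 IH2 x; rewrite (tmulDr ss1) bactDl IH1 IH2 bactDl bactDr.
- by move=> c b IH x; rewrite (tmulZr ss1) bactZl IH bactZl bactZr.
move=> X' Y' x; rewrite ptens_mul1 !bact_ptens -(tmulA ss0); congr tmul.
by rewrite (tmulA ss0) (E1R _ (ex_intro _ _ erefl)).
Qed.

Lemma bact1 x : bact (t1 D1) x = x.
Proof.
transitivity (tsum [seq tmul p.1 (E1 (tmul p.2 x)) | p <- bqb D1]); last exact: (ss_qb2 ss1 x).
rewrite (t1E D1); elim: (bqb D1) => [|p l IH] /=; first exact: bact0l.
by rewrite bactDl IH bact_ptens.
Qed.

Lemma tens_trivial : t1 D0 = t0 D0 -> forall x y : T1, x = y.
Proof. by move=> H x y; rewrite -(tmul1r ss0 x) -(tmul1r ss0 y) H !(tmulr0 ss0). Qed.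

Definition in_A (Y : T1) := forall n, n \in N -> tmul Y (ι n) = tmul (ι n) Y.
Definition in_B (p : T2) := forall r : M, tmul p (ι2 (ι r)) = tmul (ι2 (ι r)) p.

Lemma in_A_mul Y Y' : in_A Y -> in_A Y' -> in_A (tmul Y Y').
Proof. by move=> H H' n Hn; rewrite -(tmulA ss0) H' // !(tmulA ss0) H. Qed.
Lemma in_A1 : in_A (t1 D0).
Proof. by move=> n _; rewrite (tmul1l ss0) (tmul1r ss0). Qed.

Section FreeOverA.
Variables (m : nat) (bs : 'I_m -> T1).
Hypothesis bs_in_A : forall i, in_A (bs i).
Definition rcomb (cs : 'I_m -> M) : T1 := tsum [seq tmul (bs i) (ι (cs i)) | i <- enum 'I_m].
Hypothesis bs_span : forall x : T1, exists cs, x = rcomb cs.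
Hypothesis bs_free : forall cs cs', rcomb cs = rcomb cs' -> cs = cs'.

Lemma rcomb_incl_mul n cs : n \in N -> tmul (ι n) (rcomb cs) = rcomb (fun i => n * cs i).
Proof.
move=> Hn; rewrite /rcomb (tsum_mull ss0) -map_comp; apply: tsum_ext => i /=.
by rewrite (tmulA ss0) -bs_in_A // -(tmulA ss0) incl_mul0.
Qed.
Lemma rcomb_mul_incl r cs : tmul (rcomb cs) (ι r) = rcomb (fun i => cs i * r).
Proof.
rewrite /rcomb (tsum_mulr ss0) -map_comp; apply: tsum_ext => i /=.
by rewrite -(tmulA ss0) -incl_mul0.
Qed.
Lemma rcomb0 : rcomb (fun _ => 0) = t0 D0.
Proof.
by rewrite /rcomb; elim: (enum 'I_m) => [|i l IH] //=; rewrite IH incl0 (tmulr0 ss0) tadd0.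
Qed.

Lemma rcomb_coef_scalar Y cs : in_A Y -> Y = rcomb cs -> forall i, exists c : k, cs i = c%:A.
Proof.
move=> HY EY i; apply: irreducible => n Hn.
have := HY n Hn; rewrite EY rcomb_mul_incl rcomb_incl_mul //.
by move=> /bs_free /(congr1 (fun f => f i)).
Qed.

(** Write [1 = Σ b_i c_i]: the [c_i] are scalars by irreducibility, and not all zero
   unless [M_1 = 0]. *)
Lemma incl_inj : t1 D0 <> t0 D0 -> injective ι.
Proof.
move=> Hnt r r' Er.
have [cs Ecs] := bs_span (t1 D0).
have Ec : (fun i => cs i * r) = (fun i => cs i * r').
  by apply: bs_free; rewrite -!rcomb_mul_incl -Ecs !(tmul1l ss0).
case: (pickP (fun i => cs i != 0)) => [i Hi | cs0]; last first.
  case: Hnt; rewrite Ecs -rcomb0; congr rcomb; apply: functional_extensionality => i.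
  exact/eqP/negbFE/cs0.
have [c Ec'] := rcomb_coef_scalar in_A1 Ecs i.
have Hc : c != 0 by apply: contraNneq Hi => Ec0; rewrite Ec' Ec0 scale0r.
by have := congr1 (fun f => f i) Ec => /=; rewrite Ec' !mulr_algl => /(scalerI Hc).
Qed.

End FreeOverA.

(** Linear functionals need not separate an abstract [M]; they do once [M] embeds in
   the tensor space [M_1]. *)
Lemma separated_of_incl_inj : injective ι ->
  forall x y : M, (forall phi : bR D0 -> k, rlinear phi -> phi x = phi y) -> x = y.
Proof.
move=> Hinj x y H; apply: Hinj; apply: tens_ext => g Hg.
apply: (H (fun z => tev (ι z) g)); split.
- by move=> a b; rewrite /= incl_add0 tev_tadd.
- by move=> c a; rewrite /= incl_scale0 tev_tscale.
Qed.

Section SeparatedBase.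
Hypothesis separatedM :
  forall x y : M, (forall phi : bR D0 -> k, rlinear phi -> phi x = phi y) -> x = y.

Lemma tER_ptens0 (a b : M) : tER (pt0 a b) = lambda *: (a * b).
Proof. exact: (tER_ptens ss0 separatedM). Qed.
Lemma tER_add0 (x y : T1) : tER (tadd x y) = tER x + tER y.
Proof. exact: (tER_add ss0 separatedM). Qed.
Lemma tER_scale0 c (x : T1) : tER (tscale c x) = c *: tER x.
Proof. exact: (tER_scale ss0 separatedM). Qed.
Lemma tER_t0_0 : tER (t0 D0) = 0.
Proof. exact: (tER_t0 ss0 separatedM). Qed.
Lemma tER_incl_mul0 (r : M) (x : T1) : tER (tmul (ι r) x) = r * tER x.
Proof. exact: (tER_incl_mul ss0 separatedM). Qed.
Lemma tER_mul_incl0 (r : M) (x : T1) : tER (tmul x (ι r)) = tER x * r.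
Proof. exact: (tER_mul_incl ss0 separatedM). Qed.
Lemma tER_tsum0 (l : seq T1) : tER (tsum l) = \sum_(x <- l) tER x.
Proof. by rewrite (tER_tsum ss0 separatedM) rsumE big_map. Qed.

Lemma incl_e1 (r : M) : tmul (ι r) e1 = pt0 r 1.
Proof. by rewrite jonesE incl_ptens0 mulr1. Qed.
Lemma e1_incl (r : M) : tmul e1 (ι r) = pt0 1 r.
Proof. by rewrite jonesE ptens_incl0 mul1r. Qed.
Lemma e1_central (n : M) : n \in N -> tmul (ι n) e1 = tmul e1 (ι n).
Proof. by move=> Hn; rewrite incl_e1 e1_incl -{1}(mul1r n) ptensS0 // mulr1. Qed.
Lemma ptens_e1 (a b : M) : pt0 a b = tmul (tmul (ι a) e1) (ι b).
Proof. by rewrite incl_e1 ptens_incl0 mul1r. Qed.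

(** * The action of [M_1] on [M] *)

(** Locked: unfolded, [opM Y z] is itself a scaling and would match [_ *: _] patterns. *)
Fact opM_key : unit. Proof. exact: tt. Qed.
Definition opM : T1 -> M -> M :=
  locked_with opM_key (fun Y z => lambda^-1 *: tER (tmul (tmul Y (ι z)) e1)).
Lemma opME Y z : opM Y z = lambda^-1 *: tER (tmul (tmul Y (ι z)) e1).
Proof. by rewrite /opM unlock. Qed.

Lemma opM_ptens a b z : opM (pt0 a b) z = a * E (b * z).
Proof.
by rewrite !opME ptens_incl0 jonesE ptens_mul0 tER_ptens0 scalerA mulVf // scale1r !mulr1.
Qed.
Lemma opMDl Y Y' z : opM (tadd Y Y') z = opM Y z + opM Y' z.
Proof. by rewrite !opME !(tmulDl ss0) tER_add0 scalerDr. Qed.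
Lemma opMZl c Y z : opM (tscale c Y) z = c *: opM Y z.
Proof. by rewrite !opME !(tmulZl ss0) tER_scale0 !scalerA mulrC. Qed.
Lemma opM0l z : opM (t0 D0) z = 0.
Proof. by rewrite !opME !(tmul0r ss0) tER_t0_0 scaler0. Qed.
Lemma opMDr Y z z' : opM Y (z + z') = opM Y z + opM Y z'.
Proof. by rewrite !opME incl_add0 (tmulDr ss0) (tmulDl ss0) tER_add0 scalerDr. Qed.
Lemma opMZr c Y z : opM Y (c *: z) = c *: opM Y z.
Proof. by rewrite !opME incl_scale0 (tmulZr ss0) (tmulZl ss0) tER_scale0 !scalerA mulrC. Qed.
Lemma opM0r Y : opM Y 0 = 0.
Proof. by rewrite !opME incl0 (tmulr0 ss0) (tmul0r ss0) tER_t0_0 scaler0. Qed.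
Lemma opM_incl_mul w Y z : opM (tmul (ι w) Y) z = w * opM Y z.
Proof. by rewrite !opME -!(tmulA ss0) tER_incl_mul0 scalerAr. Qed.
Lemma opM_incl w z : opM (ι w) z = w * z.
Proof. by rewrite !opME -incl_mul0 incl_e1 tER_ptens0 scalerA mulVf // scale1r mulr1. Qed.
Lemma opM_e1 z : opM e1 z = E z.
Proof. by rewrite jonesE opM_ptens !mul1r. Qed.
Lemma opM_tsum (l : seq T1) z : opM (tsum l) z = \sum_(Y <- l) opM Y z.
Proof. by elim: l => [|Y l IH]; rewrite ?big_nil ?opM0l // big_cons /= opMDl IH. Qed.
Lemma opM_sumr I (s : seq I) Y (f : I -> M) : opM Y (\sum_(i <- s) f i) = \sum_(i <- s) opM Y (f i).
Proof. by elim: s => [|i s IH]; rewrite ?big_nil ?opM0r // !big_cons opMDr IH. Qed.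

Lemma opM_mul Y Y' z : opM (tmul Y Y') z = opM Y (opM Y' z).
Proof.
elim/(tens_ind (D := D0)): Y' z.
- by move=> z; rewrite (tmulr0 ss0) opM0l opM0r.
- by move=> Y1 Y2 IH1 IH2 z; rewrite (tmulDr ss0) !opMDl IH1 IH2 opMDr.
- by move=> c Y1 IH z; rewrite (tmulZr ss0) [LHS]opMZl [X in opM Y X]opMZl IH opMZr.
move=> a b z; rewrite opM_ptens !opME -!(tmulA ss0); congr (_ *: tER (tmul Y _)).
by rewrite (tmulA ss0) ptens_incl0 jonesE ptens_mul0 incl_ptens0 !mulr1.
Qed.

Lemma opM_mulN Y z n : n \in N -> opM Y (z * n) = opM Y z * n.
Proof.
move=> Hn; rewrite !opME incl_mul0 -!(tmulA ss0) e1_central // !(tmulA ss0) tER_mul_incl0.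
by rewrite scalerAl.
Qed.

Lemma ptens_sumr a (s : seq (M * M)) (f : M * M -> M) :
  pt0 a (\sum_(p <- s) f p) = tsum [seq pt0 a (f p) | p <- s].
Proof.
elim: s => [|p s IH]; rewrite ?big_nil ?big_cons /=; last by rewrite ptensDr IH.
by rewrite -(scale0r (1 : M)) ptensZr tscale0.
Qed.

Lemma tens_opM_expand Y : Y = tsum [seq tmul (tmul (ι (opM Y p.1)) e1) (ι p.2) | p <- qb].
Proof.
elim/(tens_ind (D := D0)): Y.
- rewrite -{1}(tsum0 D0 qb).
  by apply: tsum_ext => p; rewrite opM0l incl0 !(tmul0r ss0).
- move=> Y1 Y2 IH1 IH2; rewrite {1}IH1 {1}IH2 -tsum_map_add; apply: tsum_ext => p.
  by rewrite opMDl incl_add0 !(tmulDl ss0).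
- move=> c Y1 IH; rewrite {1}IH tsum_scale -map_comp; apply: tsum_ext => p /=.
  by rewrite opMZl incl_scale0 !(tmulZl ss0).
move=> a b; rewrite -{1}(qb_expand_r b) ptens_sumr; apply: tsum_ext => p.
by rewrite opM_ptens -ptens_e1 -ptensS0.
Qed.

Lemma opM_inj Y Y' : (forall z, opM Y z = opM Y' z) -> Y = Y'.
Proof.
move=> H; rewrite (tens_opM_expand Y) (tens_opM_expand Y').
by apply: tsum_ext => p; rewrite H.
Qed.

Lemma E_nondeg v v' : (forall u, E (u * v) = E (u * v')) -> v = v'.
Proof.
by move=> H; rewrite -(qb_expand_l v) -(qb_expand_l v'); apply: eq_bigr => p _; rewrite H.
Qed.

Definition bact_adj (p : T2) (x : T1) : T1 := tscale lambda^-1 (tER (tmul (tmul e2 (ι2 x)) p)).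
Definition fourier (p : T2) : T1 := tER (tmul (tmul e2 (ι2 e1)) p).

Lemma e2_central r : tmul (ι2 (ι r)) e2 = tmul e2 (ι2 (ι r)).
Proof.
rewrite jonesE incl_ptens1 ptens_incl1 (tmul1r ss0) (tmul1l ss0).
have := @ptensS k D1 _ (t1 D0) (t1 D0) (ex_intro _ r erefl).
by rewrite /= (tmul1l ss0) (tmul1r ss0).
Qed.

Lemma bact_incl_mul p r x : in_B p -> bact p (tmul (ι r) x) = tmul (ι r) (bact p x).
Proof.
move=> Hp; rewrite /bact incl_mul1 (tmulA ss1) Hp -!(tmulA ss1) tER_incl_mul1.
by rewrite (tmulZr ss0).
Qed.
Lemma bact_mul_incl p r x : in_B p -> bact p (tmul x (ι r)) = tmul (bact p x) (ι r).
Proof.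
move=> Hp; rewrite /bact incl_mul1 -!(tmulA ss1) e2_central !(tmulA ss1) tER_mul_incl1.
by rewrite (tmulZl ss0).
Qed.

Lemma bact_adj_mul_incl p r x : in_B p -> bact_adj p (tmul x (ι r)) = tmul (bact_adj p x) (ι r).
Proof.
move=> Hp; rewrite /bact_adj incl_mul1 -!(tmulA ss1) -Hp !(tmulA ss1) tER_mul_incl1.
by rewrite (tmulZl ss0).
Qed.
Lemma bact_adj0 x : bact_adj (t0 D1) x = t0 D0.
Proof. by rewrite /bact_adj (tmulr0 ss1) tER_t0_1 tscalex0. Qed.
Lemma bact_adjD p p' x : bact_adj (tadd p p') x = tadd (bact_adj p x) (bact_adj p' x).
Proof. by rewrite /bact_adj (tmulDr ss1) tER_add1 tscD. Qed.
Lemma bact_adjZ c p x : bact_adj (tscale c p) x = tscale c (bact_adj p x).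
Proof. by rewrite /bact_adj (tmulZr ss1) tER_scale1 !tscM mulrC. Qed.
Lemma bact_adj_ptens X Y x : bact_adj (pt1 X Y) x = tmul (E1 (tmul x X)) Y.
Proof.
rewrite /bact_adj jonesE ptens_incl1 ptens_mul1 tER_ptens1 tscM mulVf // tsc1.
by rewrite !(tmul1l ss0).
Qed.

Lemma tER_mul_bact p x' x : tER (tmul x' (bact p x)) = tER (tmul (bact_adj p x') x).
Proof.
elim/(tens_ind (D := D1)): p.
- by rewrite bact0l bact_adj0 (tmulr0 ss0) (tmul0r ss0).
- by move=> p1 p2 IH1 IH2; rewrite bactDl bact_adjD (tmulDr ss0) (tmulDl ss0) !tER_add0 IH1 IH2.
- by move=> c p IH; rewrite bactZl bact_adjZ (tmulZr ss0) (tmulZl ss0) !tER_scale0 IH.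
move=> X Y; rewrite bact_ptens bact_adj_ptens !E1E (tmulA ss0) tER_mul_incl0.
by rewrite -(tmulA ss0) tER_incl_mul0.
Qed.

Lemma fourier_in_A p : in_B p -> in_A (fourier p).
Proof.
move=> Hp n Hn; rewrite /fourier -tER_mul_incl1 -tER_incl_mul1; apply: f_equal.
rewrite -(tmulA ss1) Hp (tmulA ss1) -[tmul (tmul e2 (ι2 e1)) _](tmulA ss1) -incl_mul1.
by rewrite -e1_central // incl_mul1 (tmulA ss1) -e2_central -!(tmulA ss1).
Qed.

Lemma E_mul_opM Y u z :
  E (u * opM Y z) = lambda^-1 *: E (tER (tmul (tmul (tmul e1 (ι u)) Y) (ι z))).
Proof.
elim/(tens_ind (D := D0)): Y.
- by rewrite opM0l mulr0 (tmulr0 ss0) (tmul0r ss0) tER_t0_0 E0 scaler0.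
- move=> Y1 Y2 IH1 IH2; rewrite opMDl mulrDr ED IH1 IH2 (tmulDr ss0) (tmulDl ss0).
  by rewrite tER_add0 ED scalerDr.
- move=> c Y1 IH; rewrite opMZl -scalerAr EZ IH (tmulZr ss0) (tmulZl ss0).
  by rewrite tER_scale0 EZ scalerA mulrC -scalerA.
move=> a b; rewrite opM_ptens e1_incl ptens_mul0 ptens_incl0 tER_ptens0 EZ scalerA mulVf // scale1r.
by rewrite mulrA (ER _ (E_in_N _)) mul1r (EL _ (E_in_N _)).
Qed.

Lemma tER_opM Y u z : tER (tmul (tmul (tmul Y (ι u)) e1) (ι z)) = lambda *: (opM Y u * z).
Proof. by rewrite tER_mul_incl0 opME -scalerAl scalerA divff // scale1r. Qed.

Lemma E_opM_bact p u z : in_B p ->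
  E (u * opM (bact p e1) z) = lambda^-1 *: E (opM (fourier p) u * z).
Proof.
move=> Hp; rewrite E_mul_opM -(tmulA ss0) -bact_mul_incl // tER_mul_bact bact_adj_mul_incl //.
rewrite (tmulA ss0) tER_opM /bact_adj -/(fourier p) opMZl -scalerAl !EZ scalerA mulfV //.
by rewrite scale1r.
Qed.

Lemma pairing_fourier a p : pairing (D0 := D0) a p = lambda ^- 2 *: tER (tmul a (fourier p)).
Proof. by rewrite /pairing /FF /EM /EM1 /= -!(tmulA ss1) [tmul e2 _](tmulA ss1) tER_incl_mul1. Qed.

Lemma central_incl_scalar Y :
  (forall r, tmul Y (ι r) = tmul (ι r) Y) -> exists c : k, Y = ι c%:A.
Proof.
move=> HY.
have opM_Y z : opM Y z = z * opM Y 1.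
  by rewrite -opM_incl_mul -HY opM_mul opM_incl mulr1.
have [c Hc] : exists c : k, opM Y 1 = c%:A.
  by apply: irreducible => n Hn; rewrite -opM_mulN // mul1r opM_Y.
by exists c; apply: opM_inj => z; rewrite opM_incl opM_Y Hc mulr_algl mulr_algr.
Qed.

Lemma bact_one b : in_B b -> bact b (t1 D0) = ι (pairing (D0 := D0) (t1 D0) b).
Proof.
move=> Hb; have [c Ec] : exists c : k, bact b (t1 D0) = ι c%:A.
  apply: central_incl_scalar => r.
  by rewrite -(bact_mul_incl r _ Hb) -(bact_incl_mul r _ Hb) (tmul1l ss0) (tmul1r ss0).
have tER_fourier : tER (fourier b) = lambda *: (lambda *: c%:A).
  have -> : fourier b = tscale lambda (bact_adj b e1) by rewrite /bact_adj tscM mulfV // tsc1.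
  rewrite tER_scale0 -(tmul1r ss0 (bact_adj b e1)) -tER_mul_bact Ec.
  by rewrite tER_mul_incl0 jonesE tER_ptens0 mulr1 -scalerAl mul1r.
rewrite Ec pairing_fourier (tmul1l ss0) tER_fourier !scalerA; congr (ι (_ *: _)).
by field.
Qed.

(** * Depth two and the dual basis *)

Lemma tER_in_A_scalar Y : in_A Y -> exists c : k, tER Y = c%:A.
Proof. by move=> HY; apply: irreducible => n Hn; rewrite -tER_mul_incl0 HY // tER_incl_mul0. Qed.

Lemma exists_trA (Y : T1) : exists c : k, in_A Y -> tER Y = c%:A.
Proof.
by case: (classic (in_A Y)) => [/tER_in_A_scalar [c Hc] | HY]; [exists c | exists 0].
Qed.

(** The scalar value of [E_M] on [A] (arbitrary outside [A]). *)
Definition trA (Y : T1) : k := sval (constructive_indefinite_description _ (exists_trA Y)).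

Lemma trAE Y : in_A Y -> tER Y = (trA Y)%:A.
Proof. by rewrite /trA; case: constructive_indefinite_description => c /= H /H. Qed.

Lemma tens_eq0 (a : T1) : (forall x : T1, tER (tmul a x) = 0) -> a = t0 D0.
Proof.
move=> H; rewrite -(ss_qb1 ss1 a).
by elim: (bqb D1) => [|p l IH] //=; rewrite IH H incl0 (tmul0r ss0) tadd0.
Qed.

Section DualBasis.
Variables (m : nat) (bs : 'I_m -> T1).
Hypothesis bs_in_A : forall i, in_A (bs i).
Hypothesis bs_span : forall x : T1, exists cs, x = rcomb bs cs.
Hypothesis bs_free : forall cs cs', rcomb bs cs = rcomb bs cs' -> cs = cs'.

Definition kcomb (v : 'I_m -> k) : T1 := tsum [seq tscale (v j) (bs j) | j <- enum 'I_m].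
Definition gram : 'M[k]_m := \matrix_(i, j) trA (tmul (bs i) (bs j)).
Definition dual (i : 'I_m) : T1 := kcomb (fun j => invmx gram i j).

Lemma in_A_kcomb v : in_A (kcomb v).
Proof.
move=> n Hn; rewrite /kcomb (tsum_mulr ss0) (tsum_mull ss0) -!map_comp.
by apply: tsum_ext => j /=; rewrite (tmulZl ss0) (tmulZr ss0) bs_in_A.
Qed.

Lemma rcomb_alg v : rcomb bs (fun j => (v j)%:A) = kcomb v.
Proof. by apply: tsum_ext => j; rewrite incl_alg (tmulZr ss0) (tmul1r ss0). Qed.

Lemma tER_mul_rcomb (a : T1) cs :
  tER (tmul a (rcomb bs cs)) = \sum_(i <- enum 'I_m) tER (tmul a (bs i)) * cs i.
Proof.
rewrite /rcomb (tsum_mull ss0) -map_comp tER_tsum0 big_map.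
by apply: eq_bigr => i _ /=; rewrite (tmulA ss0) tER_mul_incl0.
Qed.

Lemma tER_kcomb_mul v l : tER (tmul (kcomb v) (bs l)) = (\sum_j v j * gram j l)%:A.
Proof.
rewrite /kcomb (tsum_mulr ss0) -map_comp tER_tsum0 big_map big_enum /= scaler_suml.
apply: eq_bigr => j _; rewrite (tmulZl ss0) tER_scale0 trAE; last exact: in_A_mul.
by rewrite mxE scalerA.
Qed.

Lemma gram_unit : gram \in unitmx.
Proof.
rewrite -row_free_unit; apply: inj_row_free => v Hv.
have Hv0 : kcomb (v 0) = t0 D0.
  apply: tens_eq0 => x; have [cs ->] := bs_span x.
  rewrite tER_mul_rcomb big1 // => i _.
  rewrite tER_kcomb_mul; have := congr1 (fun A : 'M[k]_(1, m) => A 0 i) Hv.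
  by rewrite [LHS]mxE => ->; rewrite mxE scale0r mul0r.
have /bs_free Hc : rcomb bs (fun j => (v 0 j)%:A) = rcomb bs (fun _ => 0).
  by rewrite rcomb0 rcomb_alg.
apply/rowP => j; rewrite mxE; apply: (fmorph_inj (in_alg M)).
by rewrite /= scale0r (congr1 (fun f => f j) Hc).
Qed.

Lemma tER_dual_mul i l : tER (tmul (dual i) (bs l)) = ((i == l)%:R : k)%:A.
Proof.
rewrite tER_kcomb_mul; congr (_ *: 1).
by have := congr1 (fun A : 'M[k]_m => A i l) (mulVmx gram_unit); rewrite !mxE.
Qed.

Lemma tens_dual_expand x : x = tsum [seq tmul (bs i) (ι (tER (tmul (dual i) x))) | i <- enum 'I_m].
Proof.
have [cs ->] := bs_span x; apply: tsum_ext => i; congr (tmul _ (ι _)).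
rewrite tER_mul_rcomb big_enum /= (bigD1 i) //= big1 ?addr0.
  by rewrite tER_dual_mul eqxx mulr_algl scale1r.
by move=> j Hj; rewrite tER_dual_mul eq_sym (negPf Hj) scale0r mul0r.
Qed.

Lemma opM_in_A Z v : in_A Z ->
  opM Z v = \sum_(i <- enum 'I_m) trA (tmul (dual i) Z) *: opM (bs i) v.
Proof.
move=> HZ; rewrite {1}(tens_dual_expand Z) opM_tsum big_map; apply: eq_bigr => i _.
rewrite trAE; last exact: in_A_mul (in_A_kcomb _) HZ.
by rewrite incl_alg (tmulZr ss0) (tmul1r ss0) opMZl.
Qed.

Lemma dual_basis_sum u w :
  lambda *: \sum_(i <- enum 'I_m) opM (bs i) (opM (dual i) u * w) = u * E w.
Proof.
have Hi i : opM (bs i) (opM (dual i) u * w) =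
    lambda^-1 *: opM (tmul (bs i) (ι (tER (tmul (dual i) (tmul (ι u) e1))))) w.
  by rewrite opM_mul opM_incl [opM (dual i) u]opME -scalerAl opMZr -(tmulA ss0).
rewrite (eq_bigr _ (fun i _ => Hi i)) -scaler_sumr scalerA mulfV // scale1r.
rewrite -(big_map (fun i => tmul (bs i) (ι (tER (tmul (dual i) (tmul (ι u) e1)))))
  xpredT (opM^~ w)).
by rewrite -opM_tsum -tens_dual_expand opM_incl_mul opM_e1.
Qed.

(** * Multiplicativity of the action *)

Section Coproduct.
Variables (b : T2) (d : seq (T2 * T2)).
Hypothesis b_in_B : in_B b.
Hypothesis d_in_B : forall p, List.In p d -> in_B p.1 /\ in_B p.2.
Hypothesis coproductP : forall a a', in_A a -> in_A a' ->
  \sum_(p <- d) pairing (D0 := D0) a p.1 * pairing (D0 := D0) a' p.2 =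
  pairing (D0 := D0) (tmul a a') b.

Lemma big_seq_In I (s : seq I) (f g : I -> M) :
  (forall p, List.In p s -> f p = g p) -> \sum_(p <- s) f p = \sum_(p <- s) g p.
Proof.
elim: s => [|p s IH] H; rewrite ?big_nil // !big_cons H; last by left.
by rewrite IH // => q Hq; apply: H; right.
Qed.

Lemma pairing_trA a p : in_A a -> in_B p ->
  pairing (D0 := D0) a p = (lambda ^- 2 * trA (tmul a (fourier p)))%:A.
Proof.
move=> Ha Hp; rewrite pairing_fourier trAE ?scalerA //.
exact: in_A_mul (fourier_in_A Hp).
Qed.

Lemma coproduct_trA a a' : in_A a -> in_A a' ->
  \sum_(p <- d) trA (tmul a (fourier p.1)) * trA (tmul a' (fourier p.2)) =
  lambda ^+ 2 * trA (tmul (tmul a a') (fourier b)).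
Proof.
move=> Ha Ha'; have := coproductP Ha Ha'.
rewrite pairing_trA //; last exact: in_A_mul.
rewrite (big_seq_In (g := fun p => ((lambda ^- 2 * trA (tmul a (fourier p.1))) *
    (lambda ^- 2 * trA (tmul a' (fourier p.2))))%:A)); last first.
  by move=> p /d_in_B [H1 H2]; rewrite !pairing_trA // mulr_algl scalerA.
rewrite -scaler_suml => /(fmorph_inj (in_alg M)) H.
have Hl2 : lambda ^- 2 != 0 by rewrite invr_neq0 // expf_neq0.
apply: (mulfI (mulf_neq0 Hl2 Hl2)); rewrite mulr_sumr.
under eq_bigr do rewrite -mulrACA.
by rewrite /= H; field.
Qed.

Lemma opM_fourier_expand p u w : in_B p.1 -> in_B p.2 ->
  opM (fourier p.2) (opM (fourier p.1) u * w) =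
  \sum_(l <- enum 'I_m) \sum_(i <- enum 'I_m)
    (trA (tmul (dual i) (fourier p.1)) * trA (tmul (dual l) (fourier p.2))) *:
    opM (bs l) (opM (bs i) u * w).
Proof.
move=> H1 H2; rewrite (opM_in_A _ (fourier_in_A H2)); apply: eq_bigr => l _.
rewrite (opM_in_A _ (fourier_in_A H1)) mulr_suml opM_sumr scaler_sumr; apply: eq_bigr => i _.
by rewrite -scalerAl opMZr scalerA mulrC.
Qed.

Lemma coproduct_opM u w :
  \sum_(p <- d) opM (fourier p.2) (opM (fourier p.1) u * w) = lambda *: (opM (fourier b) u * E w).
Proof.
pose F l i := opM (bs l) (opM (bs i) u * w).
rewrite (big_seq_In (g := fun p => \sum_(l <- enum 'I_m) \sum_(i <- enum 'I_m)
    (trA (tmul (dual i) (fourier p.1)) * trA (tmul (dual l) (fourier p.2))) *: F l i));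
  last by move=> p /d_in_B [H1 H2]; apply: opM_fourier_expand.
have coprodF l i : \sum_(p <- d)
    (trA (tmul (dual i) (fourier p.1)) * trA (tmul (dual l) (fourier p.2))) *: F l i =
    (lambda ^+ 2 * trA (tmul (tmul (dual i) (dual l)) (fourier b))) *: F l i.
  by rewrite -scaler_suml coproduct_trA //; apply: in_A_kcomb.
rewrite exchange_big /=; under eq_bigr => l _ do rewrite exchange_big /=.
under eq_bigr => l _ do under eq_bigr => i _ do rewrite coprodF.
have HbA l : in_A (tmul (dual l) (fourier b)) by apply: in_A_mul (in_A_kcomb _) (fourier_in_A _).
rewrite (eq_bigr (fun l => lambda ^+ 2 *: opM (bs l) (opM (tmul (dual l) (fourier b)) u * w)));
  last first.
  move=> l _; rewrite (opM_in_A _ (HbA l)) mulr_suml opM_sumr scaler_sumr; apply: eq_bigr => i _.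
  by rewrite -scalerAl opMZr scalerA -(tmulA ss0).
under eq_bigr do rewrite opM_mul.
by rewrite -scaler_sumr expr2 -scalerA dual_basis_sum.
Qed.

Lemma coproduct_e1 w : tsum [seq tmul (tmul (bact p.1 e1) (ι w)) (bact p.2 e1) | p <- d] =
  tmul (ι (E w)) (bact b e1).
Proof.
apply: opM_inj => z; apply: E_nondeg => u.
rewrite opM_tsum big_map mulr_sumr E_sum.
rewrite (big_seq_In (g := fun p => lambda^-1 *: (lambda^-1 *:
    E (opM (fourier p.2) (opM (fourier p.1) u * w) * z)))); last first.
  by move=> p /d_in_B [H1 H2]; rewrite !opM_mul opM_incl E_opM_bact // mulrA E_opM_bact.
rewrite -!scaler_sumr -E_sum -mulr_suml coproduct_opM -scalerAl EZ.
rewrite [lambda^-1 *: (lambda *: _)]scalerA mulVf // scale1r.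
by rewrite opM_incl_mul mulrA E_opM_bact // opM_mulN.
Qed.

Lemma bact_mul_ptens a c c' e :
  bact b (tmul (pt0 a c) (pt0 c' e)) =
  tsum [seq tmul (bact p.1 (pt0 a c)) (bact p.2 (pt0 c' e)) | p <- d].
Proof.
rewrite ptens_mul0 ptens_e1 bact_mul_incl // bact_incl_mul // incl_mul0 -(tmulA ss0 (ι a)).
rewrite -coproduct_e1 (tsum_mull ss0) (tsum_mulr ss0) -!map_comp.
elim: d d_in_B => [|p s IH] Hs //=.
have [H1 H2] := Hs p (or_introl erefl).
rewrite IH => [|q Hq]; last exact: Hs q (or_intror Hq).
rewrite !ptens_e1 !bact_mul_incl // !bact_incl_mul // incl_mul0.
by rewrite -!(tmulA ss0).
Qed.

Lemma bact_mulx x y : bact b (tmul x y) = tsum [seq tmul (bact p.1 x) (bact p.2 y) | p <- d].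
Proof.
elim/(tens_ind (D := D0)): x y.
- move=> y; rewrite (tmul0r ss0) bact0r -[LHS](tsum0 D0 d); apply: tsum_ext => p.
  by rewrite bact0r (tmul0r ss0).
- move=> x1 x2 IH1 IH2 y; rewrite (tmulDl ss0) bactDr IH1 IH2 -tsum_map_add.
  by apply: tsum_ext => p; rewrite bactDr (tmulDl ss0).
- move=> c x IH y; rewrite (tmulZl ss0) bactZr IH tsum_scale -map_comp.
  by apply: tsum_ext => p; rewrite /= bactZr (tmulZl ss0).
move=> a c; elim/(tens_ind (D := D0)).
- rewrite (tmulr0 ss0) bact0r -[LHS](tsum0 D0 d); apply: tsum_ext => p.
  by rewrite bact0r (tmulr0 ss0).
- move=> y1 y2 IH1 IH2; rewrite (tmulDr ss0) bactDr IH1 IH2 -tsum_map_add.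
  by apply: tsum_ext => p; rewrite bactDr (tmulDr ss0).
- move=> c' y IH; rewrite (tmulZr ss0) bactZr IH tsum_scale -map_comp.
  by apply: tsum_ext => p; rewrite /= bactZr (tmulZr ss0).
exact: bact_mul_ptens.
Qed.

End Coproduct.

End DualBasis.
End SeparatedBase.

Lemma left_module_algebra_tower : depth2 D0 -> left_module_algebra D0.
Proof.
case=> [[m [bs [bs_in_A [bs_span bs_free]]]] _].
case: (classic (t1 D0 = t0 D0)) => [/tens_trivial triv | nontriv].
  by split; last split; last split; last split; last split; last split; last split;
    move=> *; apply: triv.
have separatedM := separated_of_incl_inj (incl_inj bs_in_A bs_span bs_free nontriv).
split; last split; last split; last split; last split; last split; last split.
- by move=> b b' x _ _; apply: bact_mul.
- exact: bact1.
- by move=> b b' x _ _; apply: bactDl.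
- by move=> c b x _; apply: bactZl.
- by move=> b x y _; apply: bactDr.
- by move=> c b x _; apply: bactZr.
- move=> b x y d Hb Hd Hp.
  have coprod a a' : in_A a -> in_A a' -> \sum_(p <- d) pairing (D0 := D0) a p.1 *
      pairing (D0 := D0) a' p.2 = pairing (D0 := D0) (tmul a a') b.
    by move=> Ha Ha'; rewrite -(Hp a a' Ha Ha') rsumE big_map.
  exact: (bact_mulx separatedM bs_in_A bs_span bs_free Hb Hd coprod x y).
- by move=> b Hb; apply: bact_one.
Qed.

End Tower.

Theorem proposition5p1 (k : fieldType) (M : algType k) (N : {pred M})
    (E : M -> M) (qb : seq (M * M)) (lambda : k) :
  (* N is a k-subalgebra of M *)
  subalg_closed N ->
  (* irreducible: C_M(N) = k1 *)
  (forall m : M, (forall n, n \in N -> m * n = n * m) -> exists c : k, m = c%:A) ->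
  (* E : M -> N is an N-bimodule map *)
  (forall m, E m \in N) ->
  (forall m m', E (m + m') = E m + E m') ->
  (forall n m, n \in N -> E (n * m) = n * E m) ->
  (forall n m, n \in N -> E (m * n) = E m * n) ->
  (* quasi-basis (x_i, y_i) *)
  (forall m, \sum_(p <- qb) E (m * p.1) * p.2 = m) ->
  (forall m, \sum_(p <- qb) p.1 * E (p.2 * m) = m) ->
  (* normalization *)
  E 1 = 1 -> lambda != 0 -> \sum_(p <- qb) p.1 * p.2 = lambda^-1%:A ->
  (* depth 2 *)
  depth2 (base_data N E qb lambda) ->
  left_module_algebra (base_data N E qb lambda).
Proof.
move=> subalgN irreducible E_in_N ED EL ER qb_expand_r qb_expand_l E_one lambda_neq0 qb_sum.
exact: left_module_algebra_tower.
Qed.
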